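(* Let $p/q$ be an even rational parameter, $\omega=p+q$, and let $\alpha$ be the unique integer in $(0,\omega/2)$ with $2\alpha p\equiv \pm1 \pmod \omega$. For $k=0,1,\dots,(\omega-1)/2$, the lines of $\mathcal V$ of capacity $2k$ are the lines $x=n$ with $n\equiv k\alpha$ or $n\equiv \omega-k\alpha\pmod\omega$, and the lines of $\mathcal H$ of capacity $2k$ are the lines $y=n$ with $n\equiv k\alpha$ or $n\equiv\omega-k\alpha \pmod \omega$. For every odd integer $k$ with $1\le k\le \omega$, the lines of $\mathcal P$ and of $\mathcal Q$ of mass $k$ have $y$-intercept $(0,n)$ with $n\equiv k\alpha$ or $n\equiv \omega-k\alpha\pmod\omega$.
   Context: An even rational parameter is a rational $p/q\in(0,1)$, $p,q$ positive coprime integers, with $pq$ even. Put $\omega=p+q$, $P=2p/\omega$, $Q=2q/\omega$. Families of lines: $\mathcal H$ = horizontal lines $y=n$, $\mathcal V$ = vertical lines $x=n$ ($n\in\mathbb Z$), $\mathcal P$ = lines of slope $-P$ with integer $y$-intercept, $\mathcal Q$ = lines of slope $-Q$ with integer $y$-intercept. Functions mod $2\mathbb Z$, with values represented in $(-1,1]$: $F_H(x,y)=2Py$, $F_V(x,y)=2Px$, $F_P(x,y)=Py+P^2x+1$, $F_Q(x,y)=Py+PQx+1$. Each of these functions is constant on each line of the corresponding family. For a line $L$ in $\mathcal H$ (resp. $\mathcal V$) its capacity is $|\omega F_H(L)|$ (resp. $|\omega F_V(L)|$); for a line $L$ in $\mathcal P$ (resp. $\mathcal Q$) its mass is $|\omega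 F_P(L)|$ (resp. $|\omega F_Q(L)|$). (The number $\tau=\alpha/\omega$ is called the tune, so $k\alpha=k\tau\omega$.) *)

(* Exact rational arithmetic (all evaluation points are integral). *)
From mathcomp Require Import all_boot all_order all_algebra.
Set Implicit Arguments. Unset Strict Implicit. Unset Printing Implicit Defensive.
Import Order.TTheory GRing.Theory Num.Theory.
Local Open Scope ring_scope.

Definition even_param (p q : nat) : Prop :=
  (0 < p)%N /\ (p < q)%N /\ coprime p q /\ ~~ odd (p * q).

Definition omega (p q : nat) : nat := (p + q)%N.
Definition bigP (p q : nat) : rat := 2 * p%:R / (omega p q)%:R.
Definition bigQ (p q : nat) : rat := 2 * q%:R / (omega p q)%:R.

(* representative in (-1,1] of t mod 2Z *)
Definition red2 (t : rat) : rat := t - 2 * (Num.ceil ((t - 1) / 2))%:~R.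

(* the functions F_H, F_V, F_P, F_Q, mod 2Z, represented in (-1,1] *)
Definition F_H p q (x y : rat) : rat := red2 (2 * bigP p q * y).
Definition F_V p q (x y : rat) : rat := red2 (2 * bigP p q * x).
Definition F_P p q (x y : rat) : rat := red2 (bigP p q * y + bigP p q ^+ 2 * x + 1).
Definition F_Q p q (x y : rat) : rat := red2 (bigP p q * y + bigP p q * bigQ p q * x + 1).

(* lines: H_n = {y = n}, V_n = {x = n}, P_n = {y = -P x + n}, Q_n = {y = -Q x + n};
   each function is constant on the lines of its family; we evaluate at a point
   of the line: (0,n) for H_n, P_n, Q_n and (n,0) for V_n. *)
Definition capH p q (n : int) : rat := `|(omega p q)%:R * F_H p q 0 n%:~R|.
Definition capV p q (n : int) : rat := `|(omega p q)%:R * F_V p q n%:~R 0|.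
Definition massP p q (n : int) : rat := `|(omega p q)%:R * F_P p q 0 n%:~R|.
Definition massQ p q (n : int) : rat := `|(omega p q)%:R * F_Q p q 0 n%:~R|.

Definition pm_class (w k a : nat) (n : int) : bool :=
  (n == (k * a)%N %[mod w])%Z || (n == (w%:Z - (k * a)%N%:Z) %[mod w])%Z.

From mathcomp Require Import all_boot all_order all_algebra.
From mathcomp Require Import zify ring lra.
Import Order.TTheory GRing.Theory Num.Theory.
Local Open Scope ring_scope.

(* At an integer point of its line each of the four functions is red2 of an
   integer m over w = p + q, so w F is the unique integer r in (-w, w] with
   r = m (mod 2w); hence |w F| = K exactly when m = +-K (mod 2w).  For the
   capacities m = 4pn and K = 2k, which amounts to 2pn = +-k (mod w); for the
   masses m = 2pn + w with w and k odd, which amounts to the same congruence.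
   As 2 alpha p = +-1 (mod w), multiplication by 2p is invertible mod w with
   inverse +-alpha, and 2pn = +-k turns into n = +-k alpha (mod w). *)

Definition eqpm_mod (w x y : int) : bool :=
  (x == y %[mod w])%Z || (x == - y %[mod w])%Z.

Lemma eqpm_mod_dvd (w x y : int) :
  eqpm_mod w x y = (w %| x - y)%Z || (w %| x + y)%Z.
Proof. by rewrite /eqpm_mod !eqz_mod_dvd opprK. Qed.

Lemma eqpm_modC (w x y : int) : eqpm_mod w x y = eqpm_mod w y x.
Proof. by rewrite !eqpm_mod_dvd rpredBC [x + y]addrC. Qed.

Lemma eqpm_mod_trans {w x y z : int} :
  eqpm_mod w x y -> eqpm_mod w y z -> eqpm_mod w x z.
Proof.
rewrite !eqpm_mod_dvd => /orP[] hxy /orP[] hyz; apply/orP.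
- left; have -> : x - z = (x - y) + (y - z) by ring.
  exact: rpredD.
- right; have -> : x + z = (x - y) + (y + z) by ring.
  exact: rpredD.
- right; have -> : x + z = (x + y) - (y - z) by ring.
  exact: rpredB.
- left; have -> : x - z = (x + y) - (y + z) by ring.
  exact: rpredB.
Qed.

Lemma eqpm_mod_congl {w x x'} (y : int) :
  (w %| x - x')%Z -> eqpm_mod w x y = eqpm_mod w x' y.
Proof.
move=> dvd_xx'; have xx' : eqpm_mod w x x' by rewrite eqpm_mod_dvd dvd_xx'.
apply/idP/idP; first by apply: eqpm_mod_trans; rewrite eqpm_modC.
exact: eqpm_mod_trans.
Qed.

Lemma eqpm_modMl {w} (c : int) {x y : int} :
  eqpm_mod w x y -> eqpm_mod w (c * x) (c * y).
Proof.
by rewrite !eqpm_mod_dvd -mulrBr -mulrDr => /orP[] h; apply/orP;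
  [left | right]; apply: dvdz_mull.
Qed.

Lemma eqpm_mod_mul2l (c w x y : int) :
  c != 0 -> eqpm_mod (c * w) (c * x) (c * y) = eqpm_mod w x y.
Proof. by move=> c_neq0; rewrite !eqpm_mod_dvd -mulrBr -mulrDr !dvdz_mul2l. Qed.

Lemma eqpm_mod_unit {w u v : int} (x y : int) :
  eqpm_mod w (u * v) 1 -> eqpm_mod w (u * x) y = eqpm_mod w x (v * y).
Proof.
move=> uv1; apply/idP/idP => h.
- have vux : eqpm_mod w (v * (u * x)) x.
    have -> : v * (u * x) = x * (u * v) by ring.
    by rewrite -[X in eqpm_mod _ _ X]mulr1; apply: eqpm_modMl.
  by rewrite eqpm_modC in vux; apply: eqpm_mod_trans vux (eqpm_modMl v h).
- have uvy : eqpm_mod w (u * (v * y)) y.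
    have -> : u * (v * y) = y * (u * v) by ring.
    by rewrite -[X in eqpm_mod _ _ X]mulr1; apply: eqpm_modMl.
  exact: eqpm_mod_trans (eqpm_modMl u h) uvy.
Qed.

Lemma eqpm_mod_double (w x y : int) : coprimez 2 w -> (2 %| x - y)%Z ->
  eqpm_mod (2 * w) x y = eqpm_mod w x y.
Proof.
move=> co2w even_xy; have even_xDy : (2 %| x + y)%Z.
  have -> : x + y = (x - y) + 2 * y by ring.
  by rewrite rpredD ?dvdz_mulr.
by rewrite !eqpm_mod_dvd !Gauss_dvdz // even_xy even_xDy.
Qed.

Lemma pm_classE (w k a : nat) (n : int) :
  pm_class w k a n = eqpm_mod w n (a%:Z * k%:Z).
Proof.
rewrite /pm_class /eqpm_mod mulrC -PoszM !eqz_mod_dvd; congr (_ || _).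
have -> : n - (w%:Z - (k * a)%N%:Z) = n - - (k * a)%N%:Z - w%:Z by ring.
by rewrite rpredBr ?dvdzz.
Qed.

Lemma small_dvdz (d x : int) :
  0 < d -> (d %| x)%Z -> - d < x <= d -> x = 0 \/ x = d.
Proof.
move=> d_gt0 /dvdzP[c ->] /andP[lo hi].
have [c_le0 | c_gt0] := lerP c 0.
- have -> : c = 0 by nia.
  by left; rewrite mul0r.
- have -> : c = 1 by nia.
  by right; rewrite mul1r.
Qed.

Lemma eqpm_mod_window (w r K : int) : - w < r <= w -> 0 <= K <= w ->
  eqpm_mod (2 * w) r K = (`|r| == K).
Proof.
move=> /andP[r_lo r_hi] /andP[K_ge0 K_le]; rewrite eqpm_mod_dvd.
apply/idP/eqP => [|normr_K].
- case/orP=> /small_dvdz; lia.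
- have [->|->] : r = K \/ r = - K by lia.
  + by rewrite subrr dvdz0.
  + by rewrite addNr dvdz0 orbT.
Qed.

Lemma red2_itv (t : rat) : -1 < red2 t <= 1.
Proof.
rewrite /red2; have /andP[] := ceil_itv ((t - 1) / 2).
move: (Num.ceil _) => c; rewrite intrB => lo hi.
apply/andP; split; lra.
Qed.

Lemma norm_mul_red2 (w K : nat) (m : int) : (0 < w)%N -> (K <= w)%N ->
  `|w%:R * red2 (m%:~R / w%:R)| = K%:R :> rat <-> eqpm_mod (2 * w%:Z) m K.
Proof.
move=> w_gt0 K_le_w.
have w_pos : (0 : rat) < w%:R by rewrite ltr0n.
set t := m%:~R / w%:R; set c := Num.ceil ((t - 1) / 2).
have red2E : w%:R * red2 t = (m - 2 * w%:Z * c)%:~R.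
  rewrite /red2 -/c /t intrB !intrM pmulrn; field.
  by rewrite lt0r_neq0.
have r_itv : - w%:Z < m - 2 * w%:Z * c <= w%:Z.
  have /andP[lo hi] := red2_itv t.
  apply/andP; split.
  - by rewrite -(ltr_int rat) intrN -red2E pmulrn; nra.
  - by rewrite -(ler_int rat) -red2E pmulrn; nra.
have m_r : (2 * w%:Z %| m - (m - 2 * w%:Z * c))%Z.
  by rewrite opprB addrC subrK dvdz_mulr.
rewrite red2E -intr_norm (eqpm_mod_congl _ m_r) eqpm_mod_window //.
rewrite -[K%:R]/(K%:Z%:~R : rat).
by split => [/eqP | /eqP ->]; rewrite ?eqr_int.
Qed.

Lemma capH_capV (p q : nat) (n : int) : capH p q n = capV p q n.
Proof. by []. Qed.

Lemma massQ_massP (p q : nat) (n : int) : massQ p q n = massP p q n.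
Proof. by rewrite /massQ /massP /F_Q /F_P !mulr0. Qed.

Lemma capV_red2 (p q : nat) (n : int) : capV p q n =
  `|(omega p q)%:R * red2 ((2 * (2 * p%:Z * n))%:~R / (omega p q)%:R)|.
Proof. by rewrite /capV /F_V /bigP !intrM -pmulrn; congr `|_ * red2 _|; ring. Qed.

Lemma massP_red2 (p q : nat) (n : int) : (0 < omega p q)%N -> massP p q n =
  `|(omega p q)%:R * red2 ((2 * p%:Z * n + omega p q)%:~R / (omega p q)%:R)|.
Proof.
move=> w_gt0; rewrite /massP /F_P /bigP intrD !intrM -!pmulrn.
by congr `|_ * red2 _|; field; rewrite pnatr_eq0 -lt0n.
Qed.

Lemma odd_omega (p q : nat) : even_param p q -> odd (omega p q).
Proof.
case=> _ [_ [co_pq]]; rewrite /omega oddD oddM.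
case op: (odd p); case oq: (odd q) => //= _.
move: co_pq; rewrite /coprime => /eqP gcd1.
have : (2 %| gcdn p q)%N by rewrite dvdn_gcd !dvdn2 op oq.
by rewrite gcd1.
Qed.

Theorem lemma2p2 (p q : nat) (alpha : nat) :
  even_param p q ->
  (0 < alpha)%N -> (2 * alpha < omega p q)%N ->
  ((2 * alpha * p)%N%:Z == 1 %[mod omega p q])%Z
    || ((2 * alpha * p)%N%:Z == -1 %[mod omega p q])%Z ->
  (forall k : nat, (k <= (omega p q).-1 %/ 2)%N ->
     forall n : int,
       (capV p q n = (2 * k)%N%:R <-> pm_class (omega p q) k alpha n) /\
       (capH p q n = (2 * k)%N%:R <-> pm_class (omega p q) k alpha n)) /\
  (forall k : nat, odd k -> (1 <= k)%N -> (k <= omega p q)%N ->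
     forall n : int,
       (massP p q n = k%:R <-> pm_class (omega p q) k alpha n) /\
       (massQ p q n = k%:R <-> pm_class (omega p q) k alpha n)).
Proof.
move=> param _ _ halpha; set w := omega p q.
have w_odd : odd w by apply: odd_omega.
have w_gt0 : (0 < w)%N := odd_gt0 w_odd.
have unit2p : eqpm_mod w (2 * p%:Z * alpha%:Z) 1.
  by rewrite (_ : 2 * p%:Z * alpha%:Z = (2 * alpha * p)%N) //; lia.
have classE k n : eqpm_mod w (2 * p%:Z * n) k%:Z = pm_class w k alpha n.
  by rewrite pm_classE (eqpm_mod_unit n k unit2p).
split=> k.
- move=> k_le n; rewrite capH_capV capV_red2 norm_mul_red2 //; last lia.
  rewrite PoszM (eqpm_mod_mul2l 2) // classE; tauto.
- move=> k_odd k_ge1 k_le n.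
  rewrite massQ_massP massP_red2 // -/w norm_mul_red2 //.
  have co2w : coprimez 2 w by rewrite coprimezE /= coprime2n.
  have parity : (2 %| 2 * p%:Z * n + w%:Z - k%:Z)%Z by lia.
  have shift : (w%:Z %| 2 * p%:Z * n + w%:Z - 2 * p%:Z * n)%Z.
    by rewrite addrAC subrr add0r dvdzz.
  rewrite eqpm_mod_double // (eqpm_mod_congl _ shift) classE; tauto.
Qed.
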